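(* Let $p\ge2$ be an integer, $A_0\in GL_{n_1}(\mathbb{C})$ and $B_0\in GL_{n_2}(\mathbb{C})$. If $T\in\mathcal{M}_{n_2,n_1}(\mathbb{C}((z)))$ satisfies $\phi_p(T)A_0=B_0T$, then $T\in\mathcal{M}_{n_2,n_1}(\mathbb{C})$.
   Context: $\mathbb{C}((z))$ is the field of formal Laurent series and $\phi_p$ acts entrywise by $f(z)\mapsto f(z^p)$. *)

From HB Require Import structures.
From mathcomp Require Import all_boot all_order all_algebra.
From mathcomp Require Import complex.
From mathcomp Require Import Rstruct.
Set Implicit Arguments. Unset Strict Implicit. Unset Printing Implicit Defensive.
Import Order.TTheory GRing.Theory Num.Theory.
Local Open Scope ring_scope.

Definition CC : Type := (Rdefinitions.R)[i].

(* A formal Laurent series over C is given by its coefficient function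
   k |-> coefficient of z^k, whose support is bounded below. *)
Definition is_laurent (f : int -> CC) : Prop :=
  exists N : int, forall k : int, k < N -> f k = 0.

(* phi_p : f(z) |-> f(z^p) on coefficient functions:
   coefficient of z^k in f(z^p) is f_{k/p} if p | k, and 0 otherwise. *)
Definition phi_series (p : nat) (f : int -> CC) : int -> CC :=
  fun k => if (p%:Z %| k)%Z then f (k %/ p%:Z)%Z else 0.

Definition phi_mx (p : nat) {m n : nat} (T : 'M[int -> CC]_(m, n))
  : 'M[int -> CC]_(m, n) := map_mx (phi_series p) T.

Definition mx_mul_const {m n r : nat} (T : 'M[int -> CC]_(m, n))
  (A : 'M[CC]_(n, r)) : 'M[int -> CC]_(m, r) :=
  \matrix_(i, j) (fun d : int => \sum_(k < n) T i k d * A k j).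

Definition const_mul_mx {m n r : nat} (B : 'M[CC]_(m, n))
  (T : 'M[int -> CC]_(n, r)) : 'M[int -> CC]_(m, r) :=
  \matrix_(i, j) (fun d : int => \sum_(k < n) B i k * T k j d).

Definition is_const_mx {m n : nat} (T : 'M[int -> CC]_(m, n)) : Prop :=
  forall i j (d : int), d != 0 -> T i j d = 0.

From HB Require Import structures.
From mathcomp Require Import all_boot all_order all_algebra.
From mathcomp Require Import complex.
From mathcomp Require Import Rstruct.
From mathcomp Require Import zify.

Set Implicit Arguments.
Unset Strict Implicit.
Unset Printing Implicit Defensive.
Import Order.TTheory GRing.Theory Num.Theory.
Local Open Scope ring_scope.

(* Write T_d for the matrix of degree-d coefficients of T. Comparing
   coefficients of z^d in phi_p(T) A0 = B0 T gives B0 T_d = 0 when p does not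
   divide d, and T_e A0 = B0 T_(pe). As A0 and B0 are invertible, T_e vanishes
   iff T_(pe) does. A positive degree d is either prime to p or of the form pe
   with 0 < e < d, so T_d = 0 by strong induction. A negative degree e satisfies
   pe < e, so iterating e -> pe reaches the degrees below the order of T, where
   all coefficients vanish. *)

Section DilationInduction.

Variables (p : nat) (P : int -> Prop).
Hypothesis p_gt1 : (1 < p)%N.

Lemma dilation_ind_pos :
  (forall d, ~~ (p%:Z %| d)%Z -> P d) -> (forall e, P e -> P (p%:Z * e)) ->
  forall d, 0 < d -> P d.
Proof.
move=> P_ndvd P_mul [] // n; rewrite ltz_nat.
elim/ltn_ind: n => n IHn n_gt0.
have [p_dvd_n | p_ndvd_n] := boolP (p %| n)%N; last by apply: P_ndvd; rewrite dvdzE.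
rewrite -(divnK p_dvd_n) mulnC PoszM; apply/P_mul/IHn; first exact: ltn_Pdiv.
by rewrite divn_gt0 ?(ltnW p_gt1) // dvdn_leq.
Qed.

Lemma dilation_ind_neg :
  (forall e, P (p%:Z * e) -> P e) -> (exists N, forall d, d < N -> P d) ->
  forall d, d < 0 -> P d.
Proof.
move=> P_div [N P_below].
suff P_near k : forall e, e < 0 -> e < N + k%:Z -> P e.
  by move=> d d_lt0; apply: (P_near `|d - N|%N.+1) => //; lia.
elim: k => [|k IHk] e e_lt0 e_lt; first by apply: P_below; lia.
by apply/P_div/IHk; nia.
Qed.

Lemma dilation_ind :
  (forall d, ~~ (p%:Z %| d)%Z -> P d) -> (forall e, P e -> P (p%:Z * e)) ->
  (forall e, P (p%:Z * e) -> P e) -> (exists N, forall d, d < N -> P d) ->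
  forall d, d != 0 -> P d.
Proof.
move=> P_ndvd P_mul P_div P_low d; case: ltgtP => // [d_lt0 | d_gt0] _.
- exact: dilation_ind_neg.
- exact: dilation_ind_pos.
Qed.

End DilationInduction.

Lemma exists_common_lbound (I : finType) (P : I -> int -> Prop) :
  (forall i, exists N, forall k, k < N -> P i k) ->
  exists N, forall i k, k < N -> P i k.
Proof.
move=> P_low.
suff [N PN] : exists N, forall i k, i \in enum I -> k < N -> P i k.
  by exists N => i k; apply: PN; rewrite mem_enum.
elim: (enum I) => [|i s [Ns PNs]]; first by exists 0.
have [Ni PNi] := P_low i.
exists (Num.min Ni Ns) => j k; rewrite inE ltxI.
move=> /orP[/eqP-> | j_s] /andP[k_lti k_lts].
- exact: PNi.
- exact: PNs.
Qed.

Definition coef_mx {m n : nat} (T : 'M[int -> CC]_(m, n)) (d : int)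
  : 'M[CC]_(m, n) := \matrix_(i, j) T i j d.

Section CoefficientMatrices.

Variables m n : nat.
Implicit Type T : 'M[int -> CC]_(m, n).

Lemma coef_mx_mul_const r T (A : 'M[CC]_(n, r)) d :
  coef_mx (mx_mul_const T A) d = coef_mx T d *m A.
Proof. by apply/matrixP => i j; rewrite !mxE; apply: eq_bigr => k _; rewrite mxE. Qed.

Lemma coef_const_mul_mx l (B : 'M[CC]_(l, m)) T d :
  coef_mx (const_mul_mx B T) d = B *m coef_mx T d.
Proof. by apply/matrixP => i j; rewrite !mxE; apply: eq_bigr => k _; rewrite mxE. Qed.

Lemma coef_phi_mx_dvd p T e :
  p != 0%N -> coef_mx (phi_mx p T) (p%:Z * e) = coef_mx T e.
Proof.
by move=> p_neq0; apply/matrixP => i j; rewrite !mxE /phi_series dvdz_mulr // mulKz.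
Qed.

Lemma coef_phi_mx_ndvd p T d :
  ~~ (p%:Z %| d)%Z -> coef_mx (phi_mx p T) d = 0.
Proof.
by move=> p_ndvd_d; apply/matrixP => i j; rewrite !mxE /phi_series (negbTE p_ndvd_d).
Qed.

Lemma coef_mx_eq0_below T :
  (forall i j, is_laurent (T i j)) -> exists N, forall d, d < N -> coef_mx T d = 0.
Proof.
move=> T_laurent.
have [N TN] := @exists_common_lbound _ (fun ij k => T ij.1 ij.2 k = 0)
  (fun ij => T_laurent ij.1 ij.2).
by exists N => d d_lt; apply/matrixP => i j; rewrite !mxE (TN (i, j)).
Qed.

End CoefficientMatrices.

Theorem mainTheorem14 (p n1 n2 : nat) (A0 : 'M[CC]_n1) (B0 : 'M[CC]_n2)
  (T : 'M[int -> CC]_(n2, n1)) :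
  (2 <= p)%N ->
  A0 \in unitmx -> B0 \in unitmx ->
  (forall i j, is_laurent (T i j)) ->
  mx_mul_const (phi_mx p T) A0 = const_mul_mx B0 T ->
  is_const_mx T.
Proof.
move=> p_gt1 A0_unit B0_unit T_laurent eqT i j d d_neq0.
have eq_coef d' : coef_mx (phi_mx p T) d' *m A0 = B0 *m coef_mx T d'.
  by rewrite -coef_mx_mul_const eqT coef_const_mul_mx.
have p_neq0 : p != 0%N by rewrite -lt0n ltnW.
suff /matrixP/(_ i j) : coef_mx T d = 0 by rewrite !mxE.
apply: (dilation_ind (P := fun d => coef_mx T d = 0) p_gt1 _ _ _ _ d_neq0).
- move=> d' p_ndvd_d'; rewrite -(mulKmx B0_unit (coef_mx T d')) -eq_coef.
  by rewrite coef_phi_mx_ndvd // mul0mx mulmx0.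
- move=> e Te0; rewrite -(mulKmx B0_unit (coef_mx T _)) -eq_coef.
  by rewrite coef_phi_mx_dvd // Te0 mul0mx mulmx0.
- move=> e Tpe0; rewrite -(mulmxK A0_unit (coef_mx T e)).
  by rewrite -(coef_phi_mx_dvd T e p_neq0) eq_coef Tpe0 mulmx0 mul0mx.
- exact: coef_mx_eq0_below.
Qed.
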